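(* Let $R$ be a commutative ring, $E$ a simple $R$-module, $D$ a finitely generated $R$-module and $M=E\oplus D$. The following are equivalent: (a) $E$ is strongly hollow in $M$; (b) every submodule $N$ of $M$ either contains $E$ or is contained in $D$; (c) $R=\mathrm{Ann}(E)+\mathrm{Ann}(D)$; (d) $\mathrm{Ann}(D)\not\subseteq\mathrm{Ann}(E)$.
   Context: A submodule $N$ of $M$ is strongly hollow in $M$ if for all submodules $K,L$ of $M$, $N\subseteq K+L$ implies $N\subseteq K$ or $N\subseteq L$. $\mathrm{Ann}(X)=\{r\in R\mid rX=0\}$. *)

From mathcomp Require Import all_boot all_algebra.
Set Implicit Arguments. Unset Strict Implicit. Unset Printing Implicit Defensive.
Import GRing.Theory.
Local Open Scope ring_scope.

Definition submodule (R : pzRingType) (V : lmodType R) (S : V -> Prop) : Prop :=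
  [/\ S 0, (forall x y, S x -> S y -> S (x + y)) &
      (forall (r : R) x, S x -> S (r *: x))].

Definition subset_of (T : Type) (A B : T -> Prop) : Prop := forall x, A x -> B x.

Definition sum_sub (R : pzRingType) (V : lmodType R) (K L : V -> Prop) : V -> Prop :=
  fun v => exists k l, [/\ K k, L l & v = k + l].

(* N is strongly hollow in M (M = the whole module V) *)
Definition strongly_hollow (R : pzRingType) (V : lmodType R) (N : V -> Prop) : Prop :=
  forall K L : V -> Prop, submodule K -> submodule L ->
    subset_of N (sum_sub K L) -> subset_of N K \/ subset_of N L.

Definition simple_module (R : pzRingType) (E : lmodType R) : Prop :=
  (exists x : E, x != 0) /\
  forall S : E -> Prop, submodule S ->
    (forall x, S x -> x = 0) \/ (forall x, S x).

Definition fin_gen (R : pzRingType) (D : lmodType R) : Prop :=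
  exists (n : nat) (g : 'I_n -> D),
    forall d : D, exists c : 'I_n -> R, d = \sum_(i < n) c i *: g i.

Definition Ann (R : pzRingType) (X : lmodType R) : R -> Prop :=
  fun r => forall x : X, r *: x = 0.

(* The copies of E and D inside M = E (+) D, realized as E * D *)
Definition inl_sub (R : pzRingType) (E D : lmodType R) : (E * D)%type -> Prop :=
  fun m => m.2 = 0.
Definition inr_sub (R : pzRingType) (E D : lmodType R) : (E * D)%type -> Prop :=
  fun m => m.1 = 0.

From Stdlib Require Import Classical.
From mathcomp Require Import all_boot all_algebra.
Set Implicit Arguments. Unset Strict Implicit. Unset Printing Implicit Defensive.
Import GRing.Theory.
Local Open Scope ring_scope.

(* Since E is simple, it is cyclic on each nonzero element, so t E <> 0 forces
   u t to act as the identity on E for some u.  Such an element t of Ann(D)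
   moves any m of a submodule N with m.1 <> 0 to (m.1, 0), and the elements
   (e, 0) of N then form a nonzero submodule of E, hence all of it.
   Conversely, if every submodule contains E or lies in D, the cyclic
   submodule generated by (e, d) contains (e, 0): some r fixes e and kills d;
   multiplying such r over a finite generating set of D yields an element of
   Ann(D) fixing e. *)

Lemma submodule_cyclic (R : pzRingType) (V : lmodType R) (v : V) :
  submodule (fun w : V => exists s, w = s *: v).
Proof.
split.
- by exists 0; rewrite scale0r.
- by move=> _ _ [s ->] [u ->]; exists (s + u); rewrite scalerDl.
- by move=> r _ [s ->]; exists (r * s); rewrite scalerA.
Qed.

Lemma Ann_mull (R : pzRingType) (X : lmodType R) (r s : R) :
  Ann X s -> Ann X (r * s).
Proof. by move=> Hs x; rewrite -scalerA Hs scaler0. Qed.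

Lemma not_Ann_subset (R : pzRingType) (X Y : lmodType R) :
  ~ subset_of (Ann Y) (Ann X) -> exists t (x : X), Ann Y t /\ t *: x != 0.
Proof.
move=> /not_all_ex_not [t /(imply_to_and (Ann Y t)) [HtY /not_all_ex_not [x /eqP Hx]]].
by exists t, x.
Qed.

Section SimpleModule.
Variables (R : pzRingType) (E : lmodType R).
Hypothesis simpleE : simple_module E.

Lemma simple_submodule_full (S : E -> Prop) (z : E) :
  submodule S -> S z -> z != 0 -> forall x, S x.
Proof.
move=> subS Sz z_neq0; have [S0|//] := simpleE.2 S subS.
by rewrite (S0 z Sz) eqxx in z_neq0.
Qed.

Lemma simple_cyclic (e : E) : e != 0 -> forall x, exists s, x = s *: e.
Proof.
exact: simple_submodule_full (submodule_cyclic e) (ex_intro _ 1 (esym (scale1r e))).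
Qed.

End SimpleModule.

Lemma simple_inverse_mod_Ann (R : comPzRingType) (E : lmodType R) (t : R) (x : E) :
  simple_module E -> t *: x != 0 -> exists u, Ann E (1 - u * t).
Proof.
move=> simpleE tx_neq0; have [u Hu] := simple_cyclic simpleE tx_neq0 x.
have x_neq0 : x != 0 by apply: contraNneq tx_neq0 => ->; rewrite scaler0.
exists u => y; have [v ->] := simple_cyclic simpleE x_neq0 y.
by rewrite scalerA mulrC -scalerA scalerBl scale1r -scalerA -Hu subrr scaler0.
Qed.

Section ProductSubmodules.
Variables (R : pzRingType) (E D : lmodType R).

Lemma submodule_inr : submodule (@inr_sub R E D).
Proof.
split => //= [[x1 y1] [x2 y2]|r [x y]]; rewrite /inr_sub /= => H1.
- by move=> H2; change (x1 + x2 = 0); rewrite H1 H2 addr0.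
- by change (r *: x = 0); rewrite H1 scaler0.
Qed.

Lemma submodule_fst_image (N : (E * D)%type -> Prop) :
  submodule N -> submodule (fun e : E => exists d, N (e, d)).
Proof.
case=> N0 ND NZ; split; first by exists 0.
- by move=> x y [d1 H1] [d2 H2]; exists (d1 + d2); apply: ND H1 H2.
- by move=> r x [d H]; exists (r *: d); apply: NZ r _ H.
Qed.

Lemma submodule_fst_kernel (N : (E * D)%type -> Prop) :
  submodule N -> submodule (fun e : E => N (e, 0)).
Proof.
case=> N0 ND NZ; split => // [x y H1 H2|r x H].
- by have := ND _ _ H1 H2; change (N (x + y, 0 + 0) -> N (x + y, 0)); rewrite addr0.
- by have := NZ r _ H; change (N (r *: x, r *: 0) -> N (r *: x, 0)); rewrite scaler0.
Qed.

End ProductSubmodules.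

Section DirectSum.
Variables (R : comPzRingType) (E D : lmodType R).
Hypothesis simpleE : simple_module E.

Definition submodule_dichotomy : Prop :=
  forall N : (E * D)%type -> Prop, submodule N ->
    subset_of (@inl_sub R E D) N \/ subset_of N (@inr_sub R E D).

Lemma inl_not_subset_inr : ~ subset_of (@inl_sub R E D) (@inr_sub R E D).
Proof.
have [e e_neq0] := simpleE.1.
by move=> /(_ (e, 0) erefl); rewrite /inr_sub /= => e0; rewrite e0 eqxx in e_neq0.
Qed.

Lemma strongly_hollow_inlE :
  strongly_hollow (@inl_sub R E D) <-> submodule_dichotomy.
Proof.
have [e e_neq0] := simpleE.1.
split=> [hollow N subN | dich K L subK subL EKL].
  have [Nfst|Nfst] := simpleE.2 _ (submodule_fst_image subN).
    by right=> -[x d] Nxd; apply: Nfst; exists d.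
  have END : subset_of (@inl_sub R E D) (sum_sub N (@inr_sub R E D)).
    move=> [x y]; rewrite /inl_sub /= => ->; have [d Nxd] := Nfst x.
    exists (x, d), (0, - d); split => //.
    by change ((x, 0) = (x + 0, d + - d)); rewrite addr0 subrr.
  by case: (hollow N _ subN (submodule_inr E D) END) => [|/inl_not_subset_inr]; [left|].
have [|KD] := dich K subK; first by left.
have [|LD] := dich L subL; first by right.
have [k [l [Kk Ll ekl]]] := EKL (e, 0) erefl.
have : e = k.1 + l.1 := congr1 fst ekl.
by rewrite (KD _ Kk) (LD _ Ll) addr0 => e0; rewrite e0 eqxx in e_neq0.
Qed.

Lemma dichotomy_fix_kill (e : E) (d : D) :
  submodule_dichotomy -> e != 0 -> exists r : R, r *: e = e /\ r *: d = 0.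
Proof.
move=> dich e_neq0; have [Hin|Hout] := dich _ (submodule_cyclic (e, d)).
  have [r /pair_equal_spec [Hre Hrd]] := Hin (e, 0) erefl.
  by exists r; split; rewrite -?Hre -?Hrd.
have := Hout (e, d) (ex_intro _ 1 (esym (scale1r _))).
by rewrite /inr_sub /= => e0; rewrite e0 eqxx in e_neq0.
Qed.

Lemma fix_kill_seq (e : E) (s : seq D) :
  (forall d : D, exists r : R, r *: e = e /\ r *: d = 0) ->
  exists r : R, r *: e = e /\ {in s, forall d, r *: d = 0}.
Proof.
move=> fix_kill; elim: s => [|d s [r [Hre Hrs]]].
  by exists 1; split=> [|d]; rewrite ?scale1r ?in_nil.
have [u [Hue Hud]] := fix_kill d.
exists (u * r); split; first by rewrite -scalerA Hre Hue.
move=> d'; rewrite in_cons => /orP [/eqP ->|d's].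
  by rewrite mulrC -scalerA Hud scaler0.
by rewrite -scalerA Hrs ?scaler0.
Qed.

Lemma dichotomy_Ann_not_subset :
  fin_gen D -> submodule_dichotomy -> ~ subset_of (Ann D) (Ann E).
Proof.
move=> [n [g span]] dich AnnDE; have [e e_neq0] := simpleE.1.
have [r [Hre Hrg]] := fix_kill_seq [seq g i | i <- enum 'I_n]
  (fun d => dichotomy_fix_kill d dich e_neq0).
have AnnDr : Ann D r.
  move=> d; have [c ->] := span d; rewrite scaler_sumr; apply: big1 => i _.
  by rewrite scalerA mulrC -scalerA Hrg ?scaler0 // map_f ?mem_enum.
by have := AnnDE r AnnDr e; rewrite Hre => e0; rewrite e0 eqxx in e_neq0.
Qed.

Lemma Ann_not_subset_dichotomy :
  ~ subset_of (Ann D) (Ann E) -> submodule_dichotomy.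
Proof.
move=> /not_Ann_subset [t [x [AnnDt tx_neq0]]] N subN.
have [|/not_all_ex_not [m /(imply_to_and (N m)) [Nm m1_neq0]]] :=
  classic (subset_of N (@inr_sub R E D)); first by right.
left; have [u AnnE1] := simple_inverse_mod_Ann simpleE tx_neq0.
have ut_id (y : E) : (u * t) *: y = y.
  by apply/eqP; rewrite eq_sym -subr_eq0 -{1}[y]scale1r -scalerBl AnnE1.
have Nm1 : N (m.1, 0).
  have [_ _ NZ] := subN; have := NZ (u * t) m Nm.
  case: m {Nm m1_neq0} => y d; change (N ((u * t) *: y, (u * t) *: d) -> N (y, 0)).
  by rewrite ut_id (Ann_mull u AnnDt d).
have Nfull := simple_submodule_full simpleE (submodule_fst_kernel subN) Nm1.
by move=> [y d]; rewrite /inl_sub /= => ->; apply: Nfull; apply/eqP.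
Qed.

Lemma Ann_sum_cover_iff :
  (forall r : R, exists s t : R, [/\ Ann E s, Ann D t & r = s + t]) <->
  ~ subset_of (Ann D) (Ann E).
Proof.
split=> [cover AnnDE | /not_Ann_subset [t [x [AnnDt tx_neq0]]] r].
  have [e e_neq0] := simpleE.1; have [s [t [AnnEs AnnDt E1]]] := cover 1.
  have : e = 0 by rewrite -[e]scale1r E1 scalerDl AnnEs (AnnDE t AnnDt) addr0.
  by move=> e0; rewrite e0 eqxx in e_neq0.
have [u AnnE1] := simple_inverse_mod_Ann simpleE tx_neq0.
exists (r * (1 - u * t)), (r * (u * t)); split.
- exact: Ann_mull.
- by do 2 apply: Ann_mull.
- by rewrite -mulrDr subrK mulr1.
Qed.

End DirectSum.

Theorem lemma2p17 (R : comPzRingType) (E D : lmodType R) :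
  simple_module E -> fin_gen D ->
  let Ein := @inl_sub R E D in
  let Din := @inr_sub R E D in
  let a := strongly_hollow Ein in
  let b := forall N : (E * D)%type -> Prop, submodule N ->
             subset_of Ein N \/ subset_of N Din in
  let c := forall r : R, exists s t : R, [/\ Ann E s, Ann D t & r = s + t] in
  let d := ~ subset_of (Ann D) (Ann E) in
  [/\ a <-> b, b <-> c & c <-> d].
Proof.
move=> simpleE finD /=.
have cd := Ann_sum_cover_iff D simpleE.
split; first exact: strongly_hollow_inlE.
- split=> [b|c].
  + by apply/cd; apply: dichotomy_Ann_not_subset.
  + by apply: Ann_not_subset_dichotomy => //; apply/cd.
- exact: cd.
Qed.
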